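(* Let $n\ge 2$ and $m=n-1$, let $\lambda_1,\dots,\lambda_n>0$, and let $X_1,\dots,X_n$ be independent random variables with $X_i\sim\mathrm{Poisson}(\lambda_i)$. Let $\mathbf A\in\mathrm{Mat}_{m\times n}(\mathbb{N})$ (where $\mathbb{N}=\mathbb{Z}_{\ge 0}$), and define $(Y_1,\dots,Y_m)^T=\mathbf A(X_1,\dots,X_n)^T$ and $F_{\mathbf Y}(b_1,\dots,b_m)=\mathbb{P}(Y_1=b_1,\dots,Y_m=b_m)$, so that \[ F_{\mathbf Y}(b)=\sum_{\substack{k\in\mathbb{N}^n\\ \mathbf A k=b}}\frac{\lambda_1^{k_1}}{k_1!}\cdots\frac{\lambda_n^{k_n}}{k_n!}\,e^{-(\lambda_1+\dots+\lambda_n)} . \] Suppose $\mathbf A$ has rank $r=m=n-1$ and all of its elementary divisors $d_1,\dots,d_r$ equal $\pm1$. Then $F_{\mathbf Y}$ can be written as a sum over a single index: there exist an integer matrix $\mathbf M\in\mathrm{Mat}_{n\times m}(\mathbb{Z})$ and an integer vector $v\in\mathbb{Z}^n$ such that for every $b\in\mathbb{N}^m$, writing $k(j)=\mathbf M b+j v$, \[ F_{\mathbf Y}(b)=\sum_{\substack{j\in\mathbb{Z}\\ k(j)\in\mathbb{N}^n}}\frac{\lambda_1^{k_1(j)}}{k_1(j)!}\cdots\frac{\lambda_n^{k_n(j)}}{k_n(j)!}\,e^{-(\lambda_1+\dots+\lambda_n)} . \]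
   Context: Elementary divisors: every $\mathbf A\in\mathrm{Mat}_{m\times n}(\mathbb{Z})$ of rank $r$ has a Smith normal form, i.e. there are matrices $\mathbf P\in\mathrm{Mat}_{m\times m}(\mathbb{Z})$, $\mathbf Q\in\mathrm{Mat}_{n\times n}(\mathbb{Z})$ invertible over $\mathbb{Z}$ such that $\mathbf{PAQ}$ is the $m\times n$ matrix with diagonal entries $d_1,\dots,d_r,0,\dots,0$ and zeros elsewhere, with $d_i\ne0$ and $d_1\mid d_2\mid\cdots\mid d_r$; the $d_i$ are unique up to sign and are called the elementary divisors of $\mathbf A$. Equivalently $d_i=\pm\Delta_i/\Delta_{i-1}$ where $\Delta_i$ is the gcd of the $i\times i$ minors of $\mathbf A$ ($\Delta_0=1$). *)

From HB Require Import structures.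
From mathcomp Require Import all_boot all_order all_algebra.
From mathcomp Require Import classical_sets reals ereal esum sequences.
From mathcomp.analysis Require Import exp.
Set Implicit Arguments. Unset Strict Implicit. Unset Printing Implicit Defensive.
Import Order.TTheory GRing.Theory Num.Theory.
Local Open Scope ring_scope.

(* Elementary divisors of an integer matrix (Smith normal form):
   d = [d_1; ...; d_r] are elementary divisors of A iff all d_i <> 0,
   d_1 | d_2 | ... | d_r, and there are P, Q invertible over Z with
   P A Q = diag(d_1,...,d_r,0,...,0) (m x n). Then r = size d = rank A. *)
Definition smith_diag (m n : nat) (d : seq int) : 'M[int]_(m, n) :=
  \matrix_(i < m, j < n) (if (nat_of_ord i == nat_of_ord j) && (i < size d)%N
                          then d`_i else 0).

Definition elementary_divisors (m n : nat) (A : 'M[int]_(m, n)) (d : seq int) :=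
  all (fun x => x != 0) d /\
  (forall i, (i.+1 < size d)%N -> (d`_i %| d`_i.+1)%Z) /\
  exists (P : 'M[int]_m) (Q : 'M[int]_n),
    P \in unitmx /\ Q \in unitmx /\ P *m A *m Q = smith_diag m n d.

Definition poisson_weight {R : realType} (n : nat) (lambda : 'I_n -> R)
  (k : 'cV[int]_n) : R :=
  (\prod_(i < n) (lambda i ^+ `|k i ord0|%N / (`|k i ord0|%N)`!%:R))
  * expR (- \sum_(i < n) lambda i).

Definition nonneg_vec (p : nat) (k : 'cV[int]_p) : Prop := forall i, 0 <= k i ord0.

Definition F_Y {R : realType} (m n : nat) (lambda : 'I_n -> R)
  (A : 'M[int]_(m, n)) (b : 'cV[int]_m) : \bar R :=
  (\esum_(k in [set k : 'cV[int]_n | nonneg_vec k /\ A *m k = b])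
     (poisson_weight lambda k)%:E)%E.

From HB Require Import structures.
From mathcomp Require Import all_boot all_order all_algebra.
From mathcomp Require Import classical_sets reals ereal esum sequences.
From mathcomp.analysis Require Import exp.
Set Implicit Arguments. Unset Strict Implicit. Unset Printing Implicit Defensive.
Import Order.TTheory GRing.Theory Num.Theory.
Local Open Scope ring_scope.

(* If P A Q = D with D = [diag(d_1,...,d_m) | 0] and every d_i = ±1, then
   A k = b is equivalent to D (Q^-1 k) = P b.  Since d_i^2 = 1, the solutions
   of D x = y are exactly x = D^T y + j e_n with j in Z, so the integer
   solutions of A k = b form the line Q D^T P b + Z (Q e_n), and F_Y(b) is the
   sum of the Poisson weights along that line.  The positivity of the lambda_i
   and of the entries of A plays no role. *)

Lemma affine_line_inj (R : idomainType) (n : nat) (u v : 'cV[R]_n) :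
  v != 0 -> injective (fun j : R => u + j *: v).
Proof.
move=> nz_v j1 j2 /addrI /eqP; rewrite -subr_eq0 -scalerBl scalemx_eq0.
by rewrite (negPf nz_v) orbF subr_eq0 => /eqP.
Qed.

Section UnimodularSmithDiag.
Variables (p : nat) (d : seq int).
Hypotheses (size_d : size d = p) (unit_d : all (fun x => `|x| == 1) d).

Local Notation D := (smith_diag p p.+1 d).
Local Notation Dt := (smith_diag p.+1 p d).
Local Notation e := (delta_mx ord_max ord0 : 'cV[int]_p.+1).

Lemma mul_smith_entry_self (i : 'I_p) : d`_i * d`_i = 1.
Proof.
have lt_i_d : (i < size d)%N by rewrite size_d.
have /eqP norm_di := all_nthP 0 unit_d i lt_i_d.
by rewrite -expr2 -real_normK ?num_real // norm_di expr1n.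
Qed.

Lemma smith_diag_mul_col (x : 'cV[int]_p.+1) (i : 'I_p) :
  (D *m x) i ord0 = d`_i * x (lift ord_max i) ord0.
Proof.
rewrite mxE (bigD1 (lift ord_max i)) //= mxE (lift_max i) eqxx size_d ltn_ord.
rewrite big1 ?addr0 // => j ne_ji; rewrite mxE.
case: eqP => [eq_ij | _]; last by rewrite mul0r.
by case/eqP: ne_ji; apply: ord_inj; rewrite (lift_max i) eq_ij.
Qed.

Lemma smith_diag_tr_mul_col_lift (y : 'cV[int]_p) (i : 'I_p) :
  (Dt *m y) (lift ord_max i) ord0 = d`_i * y i ord0.
Proof.
rewrite mxE (bigD1 i) //= mxE (lift_max i) eqxx size_d ltn_ord.
rewrite big1 ?addr0 // => j ne_ji; rewrite mxE (lift_max i).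
case: eqP => [eq_ij | _]; last by rewrite mul0r.
by case/eqP: ne_ji; apply/val_inj.
Qed.

Lemma smith_diag_tr_mul_col_max (y : 'cV[int]_p) : (Dt *m y) ord_max ord0 = 0.
Proof.
rewrite mxE big1 // => j _; rewrite mxE /=.
by case: eqP => [eq_pj | _]; [have := ltn_ord j; rewrite -eq_pj ltnn | rewrite mul0r].
Qed.

Lemma smith_diag_mulKV (y : 'cV[int]_p) : D *m (Dt *m y) = y.
Proof.
apply/matrixP => i j; rewrite (ord1 j) smith_diag_mul_col.
by rewrite smith_diag_tr_mul_col_lift mulrA mul_smith_entry_self mul1r.
Qed.

Lemma smith_diag_mul_delta_max : D *m e = 0.
Proof.
apply/matrixP => i j; rewrite (ord1 j) smith_diag_mul_col !mxE.
by rewrite eq_sym (negPf (neq_lift ord_max i)) mulr0.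
Qed.

Lemma smith_diag_col_decomp (x : 'cV[int]_p.+1) :
  x = Dt *m (D *m x) + x ord_max ord0 *: e.
Proof.
apply/matrixP => i j; rewrite (ord1 j) {j} [RHS]mxE [in X in _ + X]mxE.
case: (unliftP ord_max i) => [i' -> | ->].
- rewrite smith_diag_tr_mul_col_lift smith_diag_mul_col mulrA mul_smith_entry_self.
  by rewrite mxE eq_sym (negPf (neq_lift ord_max i')) mulr0 addr0 mul1r.
- by rewrite smith_diag_tr_mul_col_max mxE !eqxx mulr1 add0r.
Qed.

End UnimodularSmithDiag.

Section CorankOneSolutions.
Variables (p : nat) (d : seq int) (A : 'M[int]_(p, p.+1)).
Variables (P : 'M[int]_p) (Q : 'M[int]_p.+1).
Hypotheses (size_d : size d = p) (unit_d : all (fun x => `|x| == 1) d).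
Hypotheses (unit_P : P \in unitmx) (unit_Q : Q \in unitmx).
Hypothesis PAQ : P *m A *m Q = smith_diag p p.+1 d.

Local Notation D := (smith_diag p p.+1 d).
Local Notation Dt := (smith_diag p.+1 p d).
Local Notation e := (delta_mx ord_max ord0 : 'cV[int]_p.+1).
Local Notation M := (Q *m Dt *m P).
Local Notation v := (Q *m e).

Lemma smith_kernel_neq0 : v != 0.
Proof.
apply/eqP => /(congr1 (mulmx (invmx Q))).
rewrite mulKmx // mulmx0 => /matrixP/(_ ord_max ord0).
by rewrite !mxE !eqxx.
Qed.

Lemma mul_smith_change (x : 'cV[int]_p.+1) :
  A *m (Q *m x) = invmx P *m (D *m x).
Proof. by rewrite -PAQ !mulmxA mulVmx // mul1mx. Qed.

Lemma mul_smith_line (b : 'cV[int]_p) (j : int) : A *m (M *m b + j *: v) = b.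
Proof.
have -> : M *m b + j *: v = Q *m (Dt *m (P *m b) + j *: e).
  by rewrite mulmxDr -scalemxAr !mulmxA.
rewrite mul_smith_change mulmxDr -scalemxAr smith_diag_mulKV //.
by rewrite (smith_diag_mul_delta_max size_d) scaler0 addr0 mulKmx.
Qed.

Lemma solution_on_smith_line (b : 'cV[int]_p) (k : 'cV[int]_p.+1) :
  A *m k = b -> k = M *m b + (invmx Q *m k) ord_max ord0 *: v.
Proof.
move=> Ak_b; have D_invQk : D *m (invmx Q *m k) = P *m b.
  by rewrite -Ak_b -PAQ !mulmxA mulmxK.
rewrite -[LHS](mulKVmx unit_Q).
rewrite [invmx Q *m k in LHS](smith_diag_col_decomp size_d unit_d).
by rewrite D_invQk mulmxDr -scalemxAr !mulmxA.
Qed.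

End CorankOneSolutions.

Theorem mainTheorem1 (R : realType) (n : nat) (hn : (2 <= n)%N)
  (lambda : 'I_n -> R) (hlam : forall i, 0 < lambda i)
  (A : 'M[int]_(n.-1, n)) (hA : forall i j, 0 <= A i j)
  (hdiv : exists d : seq int, elementary_divisors A d /\ size d = n.-1 /\
            all (fun x => `|x| == 1) d) :
  exists (M : 'M[int]_(n, n.-1)) (v : 'cV[int]_n),
    forall b : 'cV[int]_(n.-1), nonneg_vec b ->
      F_Y lambda A b =
      (\esum_(j in [set j : int | nonneg_vec (M *m b + j *: v)])
         (poisson_weight lambda (M *m b + j *: v))%:E)%E.
Proof.
case: n hn lambda hlam A hA hdiv => [|[|p]] // _ lambda _ A _
  [d [[_ [_ [P [Q [unit_P [unit_Q PAQ]]]]]] [size_d unit_d]]].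
exists (Q *m smith_diag p.+2 p.+1 d *m P), (Q *m delta_mx ord_max ord0) => b _.
rewrite /F_Y; apply: reindex_esum; split.
- by move=> j /= nonneg_k; split; last exact: mul_smith_line.
- by move=> j1 j2 _ _; apply: affine_line_inj; exact: smith_kernel_neq0.
- move=> k [nonneg_k /(solution_on_smith_line size_d unit_d unit_Q PAQ) on_line].
  exists ((invmx Q *m k) ord_max ord0); last by rewrite [RHS]on_line.
  by move: nonneg_k; rewrite [in nonneg_vec k]on_line.
Qed.
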